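(* Let $(G,\mu,[R])$ be a random-predicate $k$-player projection game, let $n\geqslant1$ and $i,p\in[k]$. Then $\mathbf{val}(\mathcal{T}^i_p(G)^{\otimes n})\geqslant\mathbf{val}(G^{\otimes n})^2$.
   Context: A random-predicate $k$-player game $(G,\mu,[R])$ has finite question sets $\mathcal{X}_j$, finite answer sets $\mathcal{A}_j$, a distribution $\mu$ on $\mathcal{X}_1\times\cdots\times\mathcal{X}_k$, and predicates $V_r$, $r\in[R]$; the verifier samples $q\sim\mu$ and $r\in[R]$ uniformly and independently, player $j$ answers $\alpha^j(q|_j)$ ($q|_j$ the $j$-th coordinate), and accepts iff $V_r(q,\text{answers})=1$. It is a projection game if for every $q$ and $r$ there are $D\geqslant1$ and maps $\sigma^j:\mathcal{A}_j\to[D]$ with $V_r(q,(a^1,\dots,a^k))=1$ iff $\sigma^j(a^j)=\sigma^{j'}(a^{j'})$ for all $j\neq j'$. In $G^{\otimes n}$, pairs $(q_m,r_m)$, $m\in[n]$, are sampled independently, player $j$ receives the $j$-th coordinates of $q_1,\dots,q_n$ and answers via a function $\mathcal{X}_j^n\to\mathcal{A}_j^n$, and the verifier accepts iff $V_{r_m}$ accepts coordinate $m$ for every $m$; $\mathbf{val}$ is the maximum acceptance probability. The $i$-link distribution $L_i(G)$: sample $v\sim\mu|_i$, then $q,q'$ independently from $\mu$ conditioned on $q|_i=q'|_i=v$. For $q=(x^1,\dots,x^k)$, $q'=(y^1,\dots,y^k)$, $\Pi^p((q,q'))=(y^1,\dots,y^{p-1},x^p,y^{p+1},\dots,y^k)$.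 The game $\mathcal{T}^i_p(G)$: the verifier samples $(q,q')\sim L_i(G)$ and $r\in[R]$ uniformly and independently, sends the coordinates of $\Pi^p((q,q'))$ to the players, accepts by default if $q\neq q'$, and if $q=q'$ accepts the answers $a$ iff $V_r(q,a)=1$. In $\mathcal{T}^i_p(G)^{\otimes n}$ the triples $(q_m,q'_m,r_m)$, $m\in[n]$, are sampled independently, player $j$ receives the $j$-th coordinates of $\Pi^p((q_m,q'_m))$, $m\in[n]$, and the verifier accepts iff it accepts in every coordinate. *)

From HB Require Import structures.
From mathcomp Require Import all_boot all_order all_algebra.
Set Implicit Arguments. Unset Strict Implicit. Unset Printing Implicit Defensive.
Import Order.TTheory GRing.Theory Num.Theory.
Local Open Scope ring_scope.

Section Games.
Variables (R : realFieldType) (k : nat) (X A : 'I_k -> finType).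

Definition qtype := {dffun forall j : 'I_k, X j}.
Definition atype := {dffun forall j : 'I_k, A j}.

Definition is_projection (Rn : nat) (V : 'I_Rn -> qtype -> atype -> bool) : Prop :=
  forall (q : qtype) (r : 'I_Rn), exists (D : nat), (1 <= D)%N /\
    exists sigma : forall j : 'I_k, A j -> 'I_D,
      forall a : atype, V r q a = true <-> (forall j j', j != j' -> sigma j (a j) = sigma j' (a j')).

(* A general (one-shot) game: a finite sample space Om with probability weights pi,
   the question tuple qs w sent to the players, and the acceptance predicate acc w. *)

Definition nstrat (n : nat) :=
  {dffun forall j : 'I_k, {ffun n.-tuple (X j) -> n.-tuple (A j)}}.

Definition nanswers (Om : finType) (qs : Om -> qtype) (n : nat) (s : nstrat n)
    (w : n.-tuple Om) (m : 'I_n) : atype :=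
  [ffun j => tnth (s j [tuple (qs (tnth w m')) j | m' < n]) m].

Definition nacc (Om : finType) (pi : Om -> R) (qs : Om -> qtype)
    (acc : Om -> atype -> bool) (n : nat) (s : nstrat n) : R :=
  \sum_(w : n.-tuple Om) (\prod_(m < n) pi (tnth w m)) *
     (if [forall m : 'I_n, acc (tnth w m) (nanswers qs s w m)] then 1 else 0).

Definition nval (Om : finType) (pi : Om -> R) (qs : Om -> qtype)
    (acc : Om -> atype -> bool) (n : nat) : R :=
  \big[Num.max/0]_(s : nstrat n) nacc pi qs acc s.

(* The random-predicate game (G, mu, [Rn]): sample (q, r), send q, accept iff V_r(q, a). *)
Definition G_pi (mu : qtype -> R) (Rn : nat) (w : qtype * 'I_Rn) : R := mu w.1 / Rn%:R.
Definition G_qs (Rn : nat) (w : qtype * 'I_Rn) : qtype := w.1.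
Definition G_acc (Rn : nat) (V : 'I_Rn -> qtype -> atype -> bool)
  (w : qtype * 'I_Rn) (a : atype) : bool := V w.2 w.1 a.

Definition val_Gn (mu : qtype -> R) (Rn : nat) (V : 'I_Rn -> qtype -> atype -> bool) (n : nat) : R :=
  nval (G_pi mu (Rn:=Rn)) (@G_qs Rn) (G_acc V) n.

Definition marg (mu : qtype -> R) (i : 'I_k) (v : X i) : R :=
  \sum_(q : qtype | q i == v) mu q.
Definition cond (mu : qtype -> R) (i : 'I_k) (v : X i) (q : qtype) : R :=
  if q i == v then mu q / marg mu v else 0.

Definition link (mu : qtype -> R) (i : 'I_k) (q q' : qtype) : R :=
  \sum_(v : X i) marg mu v * cond mu v q * cond mu v q'.

Definition Pi (p : 'I_k) (q q' : qtype) : qtype :=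
  [ffun j => if j == p then q j else q' j].

Definition T_pi (mu : qtype -> R) (i : 'I_k) (Rn : nat) (w : qtype * qtype * 'I_Rn) : R :=
  link mu i w.1.1 w.1.2 / Rn%:R.
Definition T_qs (p : 'I_k) (Rn : nat) (w : qtype * qtype * 'I_Rn) : qtype := Pi p w.1.1 w.1.2.
Definition T_acc (Rn : nat) (V : 'I_Rn -> qtype -> atype -> bool)
  (w : qtype * qtype * 'I_Rn) (a : atype) : bool :=
  (w.1.1 != w.1.2) || V w.2 w.1.1 a.

Definition val_Tn (mu : qtype -> R) (i p : 'I_k) (Rn : nat)
    (V : 'I_Rn -> qtype -> atype -> bool) (n : nat) : R :=
  nval (T_pi mu i (Rn:=Rn)) (@T_qs p Rn) (T_acc V) n.

End Games.

From mathcomp Require Import all_boot all_order all_algebra.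
From mathcomp Require Import ring lra.
Set Implicit Arguments. Unset Strict Implicit. Unset Printing Implicit Defensive.
Import Order.TTheory GRing.Theory Num.Theory.
Local Open Scope ring_scope.

(* Fix a strategy s and predicate indices r.  Drawing the questions Q of G^n
   amounts to drawing their i-th columns vt from (mu|_i)^n and then Q given vt,
   and a draw (Q, Q') of L_i(G)^n is a pair of conditionally independent draws
   given the same vt.  If s wins on Q and on Q', then it also wins T^i_p(G)^n on
   the hybrid questions Pi^p(Q, Q'): where Q = Q', player p answers as on Q, the
   others as on Q', player i answers identically in both, and in a projection
   game answers accepted together with a common i-th answer all project to the
   same label.  Jensen's inequality over vt and over r gives
   acc_G(s)^2 <= acc_T(s), and maximising over s gives the claim. *)

Section Tuples.
Variables (T U : Type) (n : nat).

Definition tzip (a : n.-tuple T) (b : n.-tuple U) : n.-tuple (T * U) :=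
  [tuple (tnth a m, tnth b m) | m < n].

Lemma tnth_tzip a b m : tnth (tzip a b) m = (tnth a m, tnth b m).
Proof. exact: tnth_mktuple. Qed.

End Tuples.

Lemma sum_tuple_pair (R : nmodType) (T U : finType) n (F : n.-tuple (T * U) -> R) :
  \sum_(w : n.-tuple (T * U)) F w = \sum_(a : n.-tuple T) \sum_(b : n.-tuple U) F (tzip a b).
Proof.
rewrite pair_big /= (reindex (fun ab : n.-tuple T * n.-tuple U => tzip ab.1 ab.2)) //.
pose unzip (w : n.-tuple (T * U)) :=
  ([tuple (tnth w m).1 | m < n], [tuple (tnth w m).2 | m < n]).
apply: onW_bij; exists unzip => [[a b]|w].
  by congr pair; apply: eq_from_tnth => m; rewrite !tnth_mktuple.
by apply: eq_from_tnth => m; rewrite tnth_tzip !tnth_mktuple; case: (tnth w m).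
Qed.

Lemma sqr_wmean_le (R : realFieldType) (I : finType) (h w : I -> R) :
  (forall j, 0 <= w j) -> \sum_j w j = 1 ->
  (\sum_j w j * h j) ^+ 2 <= \sum_j w j * h j ^+ 2.
Proof.
move=> w_ge0 w_sum1; set a := \sum_j w j * h j.
have : 0 <= \sum_j w j * (h j - a) ^+ 2.
  by apply: sumr_ge0 => j _; rewrite mulr_ge0 ?sqr_ge0.
have expand j : w j * (h j - a) ^+ 2 = w j * h j ^+ 2 - a *+ 2 * (w j * h j) + a ^+ 2 * w j.
  by ring.
rewrite (eq_bigr _ (fun j _ => expand j)) big_split sumrB /= -!mulr_sumr w_sum1 -/a.
lra.
Qed.

Section IndependentCopies.
Variables (R : realFieldType) (I T : finType) (M : I -> R) (C : I -> T -> R).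
Hypotheses (M_ge0 : forall v, 0 <= M v) (M_sum1 : \sum_v M v = 1).
Hypothesis C_ge0 : forall v t, 0 <= C v t.

(* Draw v with weight M and then t with weight C v: the probability of W, squared,
   is at most the probability of H on two copies of t drawn independently given v. *)
Lemma sqr_mixture_le_copies (W : T -> bool) (H : T -> T -> bool) :
  (forall v t t', C v t * C v t' != 0 -> W t -> W t' -> H t t') ->
  (\sum_t (\sum_v M v * C v t) * (W t)%:R) ^+ 2 <=
  \sum_t \sum_t' (\sum_v M v * C v t * C v t') * (H t t')%:R.
Proof.
move=> WWH; pose h v := \sum_t C v t * (W t)%:R.
have -> : \sum_t (\sum_v M v * C v t) * (W t)%:R = \sum_v M v * h v.
  under eq_bigr do rewrite mulr_suml.
  rewrite exchange_big; apply: eq_bigr => v _; rewrite mulr_sumr.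
  by apply: eq_bigr => t _; rewrite mulrA.
apply: le_trans (sqr_wmean_le h M_ge0 M_sum1) _.
under [X in _ <= X]eq_bigr do under eq_bigr do rewrite mulr_suml.
under [X in _ <= X]eq_bigr do rewrite exchange_big.
rewrite exchange_big; apply: ler_sum => v _.
rewrite /h expr2 mulr_suml mulr_sumr; apply: ler_sum => t _.
rewrite !mulr_sumr; apply: ler_sum => t' _.
rewrite [leLHS](_ : _ = M v * (C v t * C v t') * ((W t)%:R * (W t')%:R)); last by ring.
rewrite [leRHS](_ : _ = M v * (C v t * C v t') * (H t t')%:R); last by ring.
have [->|CCnz] := eqVneq (C v t * C v t') 0; first by rewrite mulr0 !mul0r.
apply: ler_wpM2l; first by rewrite mulr_ge0 ?mulr_ge0.
rewrite -natrM mulnb ler_nat.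
by case: andP => // [[Wt Wt']]; rewrite (WWH v t t').
Qed.

End IndependentCopies.

Section ProjectionGames.
Variables (k : nat) (X A : 'I_k -> finType) (Rn : nat).
Variable V : 'I_Rn -> qtype X -> atype A -> bool.
Hypothesis Vproj : is_projection V.

Lemma projection_accept_mix r q (a b c : atype A) i :
  V r q a -> V r q b -> a i = b i -> (forall j, c j = a j \/ c j = b j) -> V r q c.
Proof.
have [D [_ [sg sgP]]] := Vproj q r.
move=> /sgP Va /sgP Vb ab_i cab; apply/sgP.
have sg_c j : sg j (c j) = sg i (a i).
  have [->|ji] := eqVneq j i; first by case: (cab i) => ->; rewrite ?ab_i.
  by case: (cab j) => ->; [apply: Va | rewrite ab_i; apply: Vb].
by move=> j j' _; rewrite !sg_c.
Qed.

End ProjectionGames.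

Section ParallelRepetition.
Variables (R : realFieldType) (k : nat) (X A : 'I_k -> finType) (n : nat).
Variable s : nstrat X A n.

Lemma nanswers_col (O O' : finType) (qs : O -> qtype X) (qs' : O' -> qtype X)
    (w : n.-tuple O) (w' : n.-tuple O') j m :
  (forall m', qs (tnth w m') j = qs' (tnth w' m') j) ->
  nanswers qs s w m j = nanswers qs' s w' m j.
Proof. by move=> col; rewrite !ffunE; congr (tnth (s j _) m); apply: eq_mktuple. Qed.

Lemma nacc_random_predicate (B : finType) (f : B -> R) (g : B -> qtype X) (Rn : nat)
    (acc : B * 'I_Rn -> atype A -> bool) :
  nacc (fun w => f w.1 / Rn%:R) (fun w => g w.1) acc s =
  \sum_(r : n.-tuple 'I_Rn) Rn%:R^-1 ^+ n *
    \sum_(Q : n.-tuple B) (\prod_(m < n) f (tnth Q m)) *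
      [forall m, acc (tnth Q m, tnth r m) (nanswers g s Q m)]%:R.
Proof.
rewrite /nacc sum_tuple_pair exchange_big; apply: eq_bigr => r _.
rewrite mulr_sumr; apply: eq_bigr => Q _.
under eq_bigr do rewrite tnth_tzip.
rewrite big_split prodr_const card_ord /=.
have -> : [forall m, acc (tnth (tzip Q r) m) (nanswers (fun w => g w.1) s (tzip Q r) m)] =
          [forall m, acc (tnth Q m, tnth r m) (nanswers g s Q m)].
  apply: eq_forallb => m; rewrite tnth_tzip; congr (acc _ _).
  by apply/ffunP => j; apply: nanswers_col => m'; rewrite tnth_tzip.
by case: [forall _, _]; rewrite /= ?mulr1 ?mulr0 // mulrC.
Qed.

End ParallelRepetition.

Section Conditioning.
Variables (R : realFieldType) (k : nat) (X : 'I_k -> finType) (mu : qtype X -> R).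
Hypotheses (mu_ge0 : forall q, 0 <= mu q) (mu_sum1 : \sum_q mu q = 1).
Variable i : 'I_k.

Lemma marg_ge0 (v : X i) : 0 <= marg mu v.
Proof. exact: sumr_ge0. Qed.

Lemma cond_ge0 (v : X i) q : 0 <= cond mu v q.
Proof. by rewrite /cond; case: ifP => // _; rewrite divr_ge0 ?marg_ge0. Qed.

Lemma sum_marg : \sum_(v : X i) marg mu v = 1.
Proof. by rewrite -mu_sum1 (partition_big (fun q : qtype X => q i) xpredT). Qed.

Lemma mu_cond_decomp q : mu q = \sum_(v : X i) marg mu v * cond mu v q.
Proof.
rewrite (bigD1 (q i)) //= big1 ?addr0 => [|v /negbTE vq]; last by rewrite /cond eq_sym vq mulr0.
rewrite /cond eqxx; have [marg0|marg_nz] := eqVneq (marg mu (q i)) 0.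
  by rewrite marg0 mul0r (psumr_eq0P _ marg0).
by rewrite mulrC divfK.
Qed.

Variable n : nat.

Definition margn (vt : {ffun 'I_n -> X i}) : R := \prod_(m < n) marg mu (vt m).
Definition condn (vt : {ffun 'I_n -> X i}) (Q : n.-tuple (qtype X)) : R :=
  \prod_(m < n) cond mu (vt m) (tnth Q m).

Lemma margn_ge0 vt : 0 <= margn vt.
Proof. by apply: prodr_ge0 => m _; apply: marg_ge0. Qed.

Lemma condn_ge0 vt Q : 0 <= condn vt Q.
Proof. by apply: prodr_ge0 => m _; apply: cond_ge0. Qed.

Lemma sum_margn : \sum_vt margn vt = 1.
Proof.
rewrite -(bigA_distr_bigA (fun (_ : 'I_n) (v : X i) => marg mu v)) big1 // => m _.
exact: sum_marg.
Qed.

Lemma condn_neq0 vt Q : condn vt Q != 0 -> forall m, tnth Q m i = vt m.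
Proof.
move=> /prodf_neq0 cond_nz m; move: (cond_nz m isT).
by rewrite /cond; case: ifP => [/eqP|_] //; rewrite eqxx.
Qed.

Lemma prod_mu_decomp Q :
  \prod_(m < n) mu (tnth Q m) = \sum_vt margn vt * condn vt Q.
Proof.
under eq_bigr do rewrite (mu_cond_decomp (tnth _ _)).
by rewrite bigA_distr_bigA; apply: eq_bigr => vt _; rewrite -big_split.
Qed.

Lemma prod_link_decomp Q Q' :
  \prod_(m < n) link mu i (tnth Q m) (tnth Q' m) =
  \sum_vt margn vt * condn vt Q * condn vt Q'.
Proof. by rewrite bigA_distr_bigA; apply: eq_bigr => vt _; rewrite -!big_split. Qed.

End Conditioning.

Section Strategy.
Variables (R : realFieldType) (k : nat) (X A : 'I_k -> finType) (mu : qtype X -> R).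
Hypotheses (mu_ge0 : forall q, 0 <= mu q) (mu_sum1 : \sum_q mu q = 1).
Variables (Rn : nat) (V : 'I_Rn -> qtype X -> atype A -> bool).
Hypothesis Vproj : is_projection V.
Variables (n : nat) (s : nstrat X A n) (i p : 'I_k).

Definition winsG (r : n.-tuple 'I_Rn) (Q : n.-tuple (qtype X)) : bool :=
  [forall m, V (tnth r m) (tnth Q m) (nanswers id s Q m)].

Definition winsT (r : n.-tuple 'I_Rn) (Q Q' : n.-tuple (qtype X)) : bool :=
  [forall m, (tnth Q m != tnth Q' m) ||
     V (tnth r m) (tnth Q m) (nanswers (fun b => Pi p b.1 b.2) s (tzip Q Q') m)].

Lemma winsT_hybrid r (Q Q' : n.-tuple (qtype X)) :
  (forall m, tnth Q m i = tnth Q' m i) -> winsG r Q -> winsG r Q' -> winsT r Q Q'.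
Proof.
move=> Q_i /forallP winQ /forallP winQ'; apply/forallP => m.
have [eqQm|//] := eqVneq (tnth Q m) (tnth Q' m).
apply: (projection_accept_mix Vproj (winQ m) (b := nanswers id s Q' m)).
- by rewrite eqQm; apply: winQ'.
- exact: nanswers_col.
move=> j; have [->|jp] := eqVneq j p; [left|right].
  by apply: nanswers_col => m'; rewrite tnth_tzip /Pi ffunE eqxx.
by apply: nanswers_col => m'; rewrite tnth_tzip /Pi ffunE (negbTE jp).
Qed.

Lemma nacc_sqr_le_link (Rn_gt0 : (0 < Rn)%N) :
  nacc (G_pi mu (Rn:=Rn)) (@G_qs k X Rn) (G_acc V) s ^+ 2 <=
  nacc (T_pi mu i (Rn:=Rn)) (@T_qs k X p Rn) (T_acc V) s.
Proof.
rewrite (nacc_random_predicate s mu id).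
rewrite (nacc_random_predicate s (fun b => link mu i b.1 b.2) (fun b => Pi p b.1 b.2)).
set rho := Rn%:R^-1 ^+ n.
have rho_ge0 : 0 <= rho by rewrite exprn_ge0 // invr_ge0 ler0n.
have rho_sum1 : \sum_(r : n.-tuple 'I_Rn) rho = 1.
  rewrite sumr_const card_tuple card_ord -mulr_natr natrX -exprMn mulVf ?expr1n //.
  by rewrite pnatr_eq0 -lt0n.
apply: le_trans (sqr_wmean_le _ (fun=> rho_ge0) rho_sum1) _.
apply: ler_sum => r _; apply: ler_wpM2l => //.
under eq_bigr do rewrite (prod_mu_decomp mu_ge0 i).
apply: le_trans (sqr_mixture_le_copies (margn_ge0 mu_ge0 (i:=i) (n:=n))
  (sum_margn mu_sum1 i n) (condn_ge0 mu_ge0 (i:=i) (n:=n)) (W := winsG r) (H := winsT r) _) _.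
  move=> vt Q Q'; rewrite mulf_eq0 negb_or => /andP [/condn_neq0 Q_i /condn_neq0 Q'_i].
  by apply: winsT_hybrid => m; rewrite Q_i Q'_i.
rewrite sum_tuple_pair; apply: ler_sum => Q _; apply: ler_sum => Q' _.
under [X in _ <= X * _]eq_bigr do rewrite tnth_tzip.
under eq_forallb do rewrite tnth_tzip.
by rewrite prod_link_decomp.
Qed.

End Strategy.

Theorem claim3p5 (R : realFieldType) (k : nat) (X A : 'I_k -> finType)
  (mu : qtype X -> R) (mu_ge0 : forall q, 0 <= mu q) (mu_sum1 : \sum_q mu q = 1)
  (Rn : nat) (Rn_gt0 : (0 < Rn)%N) (V : 'I_Rn -> qtype X -> atype A -> bool)
  (Vproj : is_projection V) (n : nat) (n_gt0 : (1 <= n)%N) (i p : 'I_k) :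
  val_Gn mu V n ^+ 2 <= val_Tn mu i p V n.
Proof.
apply: (big_ind (fun x => x ^+ 2 <= val_Tn mu i p V n)).
- rewrite expr2 mulr0; exact: bigmax_ge_id.
- by move=> x y; case: (leP x y).
move=> s _; apply: le_trans (nacc_sqr_le_link mu_ge0 mu_sum1 Vproj s i p Rn_gt0) _.
exact: le_bigmax.
Qed.
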